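(* Suppose that for every connected graph $G$, the number of pairwise non-isomorphic connected graphs equimorphic to $G$ is either $1$ or infinite. Then for every graph $G$, the number of pairwise non-isomorphic graphs equimorphic to $G$ is either $1$ or infinite.
   Context: Graphs are undirected and loopless. $G$ embeds into $G'$ if $G$ is isomorphic to an induced subgraph of $G'$; $G,G'$ are equimorphic if each embeds into the other. *)

From Stdlib Require Import List Relation_Operators.

Record Graph : Type := mkGraph {
  V : Type;
  adj : V -> V -> Prop;
  adj_sym : forall x y, adj x y -> adj y x;
  adj_irrefl : forall x, ~ adj x x
}.

(* G embeds into G': G is isomorphic to an induced subgraph of G', i.e. there
   is an injective map preserving and reflecting adjacency. *)
Definition embeds (G G' : Graph) : Prop :=
  exists f : V G -> V G',
    (forall x y, f x = f y -> x = y) /\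
    (forall x y, adj G x y <-> adj G' (f x) (f y)).

Definition equimorphic (G G' : Graph) : Prop := embeds G G' /\ embeds G' G.

Definition isomorphic (G G' : Graph) : Prop :=
  exists (f : V G -> V G') (g : V G' -> V G),
    (forall x, g (f x) = x) /\ (forall y, f (g y) = y) /\
    (forall x y, adj G x y <-> adj G' (f x) (f y)).

Definition connected (G : Graph) : Prop :=
  inhabited (V G) /\ forall x y, clos_refl_trans (V G) (adj G) x y.

Definition one_equimorphism_class (G : Graph) : Prop :=
  forall H, equimorphic H G -> isomorphic H G.

(* The number of isomorphism classes of graphs equimorphic to G is infinite:
   no finite list of graphs represents all of them up to isomorphism. *)
Definition infinitely_many_equimorphism_classes (G : Graph) : Prop :=
  ~ exists l : list Graph,
      forall H, equimorphic H G -> exists H', In H' l /\ isomorphic H H'.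

Definition one_connected_equimorphism_class (G : Graph) : Prop :=
  forall H, connected H -> equimorphic H G -> isomorphic H G.

Definition infinitely_many_connected_equimorphism_classes (G : Graph) : Prop :=
  ~ exists l : list Graph,
      forall H, connected H -> equimorphic H G ->
        exists H', In H' l /\ isomorphic H H'.

(* If G has only finitely many equimorphism classes, one reduces to a connected
   graph: a disconnected nonempty graph has a connected complement, and
   complementation preserves embeddings and isomorphisms.  For connected G the
   hypothesis leaves only a disconnected K equimorphic to G to rule out.  Such
   a K contains a copy of G plus a vertex outside its component, so G + K1
   embeds into K, hence into G; then G + 2K1 and G + K1 are equimorphic.  Their
   complements are connected (the added vertex is universal) and again have
   finitely many classes, so the hypothesis makes them isomorphic.  But G has
   no isolated vertex, so G + 2K1 has two isolated vertices and G + K1 one. *)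

From Stdlib Require Import List Relation_Operators Operators_Properties Classical.

Local Notation reach G := (clos_refl_trans (V G) (adj G)).

Lemma embeds_trans (A B C : Graph) : embeds A B -> embeds B C -> embeds A C.
Proof.
  intros [f [f_inj f_adj]] [g [g_inj g_adj]].
  exists (fun x => g (f x)); split; [auto|].
  intros x y; rewrite f_adj; apply g_adj.
Qed.

Lemma equimorphic_trans (A B C : Graph) :
  equimorphic A B -> equimorphic B C -> equimorphic A C.
Proof. intros [] []; split; eapply embeds_trans; eauto. Qed.

Lemma embeds_of_isomorphic (A B : Graph) : isomorphic A B -> embeds A B.
Proof.
  intros [f [g [gf [_ f_adj]]]]; exists f; split; [|exact f_adj].
  intros x y e; rewrite <- (gf x), <- (gf y), e; reflexivity.
Qed.

Lemma isomorphic_sym (A B : Graph) : isomorphic A B -> isomorphic B A.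
Proof.
  intros [f [g [gf [fg f_adj]]]]; exists g, f; split; [|split]; auto.
  intros x y; rewrite f_adj, !fg; reflexivity.
Qed.

Lemma isomorphic_trans (A B C : Graph) :
  isomorphic A B -> isomorphic B C -> isomorphic A C.
Proof.
  intros [f [f' [f'f [ff' f_adj]]]] [g [g' [g'g [gg' g_adj]]]].
  exists (fun x => g (f x)), (fun z => f' (g' z)); split; [|split].
  - intro x; rewrite g'g; apply f'f.
  - intro z; rewrite ff'; apply gg'.
  - intros x y; rewrite f_adj; apply g_adj.
Qed.

Lemma equimorphic_of_isomorphic (A B : Graph) : isomorphic A B -> equimorphic A B.
Proof.
  intro i; split; apply embeds_of_isomorphic; [|apply isomorphic_sym]; exact i.
Qed.

Lemma reach_sym (G : Graph) (x y : V G) : reach G x y -> reach G y x.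
Proof. induction 1; eauto using rt_step, rt_refl, rt_trans, adj_sym. Qed.

Lemma reach_map (A B : Graph) (f : V A -> V B) :
  (forall x y, adj A x y -> adj B (f x) (f y)) ->
  forall x y, reach A x y -> reach B (f x) (f y).
Proof. intros f_adj x y r; induction r; eauto using rt_step, rt_refl, rt_trans. Qed.

Lemma not_connected_unreachable (G : Graph) (v : V G) :
  ~ connected G -> exists z, ~ reach G v z.
Proof.
  intro disconnected; apply NNPP; intro all_reached.
  apply disconnected; split; [exact (inhabits v)|].
  intros x y; apply rt_trans with v.
  - apply reach_sym, NNPP; eauto.
  - apply NNPP; eauto.
Qed.

Definition isolated (G : Graph) (v : V G) : Prop := forall w, ~ adj G v w.

Lemma reach_from_isolated (G : Graph) (v w : V G) :
  isolated G v -> reach G v w -> v = w.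
Proof.
  intros iso r; apply clos_rt_rt1n in r; destruct r as [|u w vu _]; [reflexivity|].
  destruct (iso u vu).
Qed.

Lemma connected_not_isolated (G : Graph) (x y : V G) :
  connected G -> x <> y -> forall v, ~ isolated G v.
Proof.
  intros [_ reach_all] xy v iso; apply xy.
  rewrite <- (reach_from_isolated _ _ _ iso (reach_all v x)).
  exact (reach_from_isolated _ _ _ iso (reach_all v y)).
Qed.

Definition compl (G : Graph) : Graph.
Proof.
  refine (mkGraph (V G) (fun x y => x <> y /\ ~ adj G x y) _ _).
  - intros x y [xy nadj]; split; [congruence | intro a; apply nadj, adj_sym, a].
  - intros x [xx _]; apply xx; reflexivity.
Defined.

Lemma adj_compl_compl (G : Graph) (x y : V G) :
  adj (compl (compl G)) x y <-> adj G x y.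
Proof.
  simpl; split.
  - intros [xy nadj]; apply NNPP; intro a; apply nadj; split; assumption.
  - intro a; split.
    + intros ->; exact (adj_irrefl G y a).
    + intros [_ na]; exact (na a).
Qed.

Lemma isomorphic_compl_compl (G : Graph) : isomorphic (compl (compl G)) G.
Proof.
  exists (fun x => x), (fun x => x); split; [|split]; auto.
  intros x y; exact (adj_compl_compl G x y).
Qed.

Lemma compl_adj_iff (A B : Graph) (f : V A -> V B) :
  (forall x y, f x = f y -> x = y) ->
  (forall x y, adj A x y <-> adj B (f x) (f y)) ->
  forall x y, adj (compl A) x y <-> adj (compl B) (f x) (f y).
Proof.
  intros f_inj f_adj x y; simpl; rewrite f_adj.
  split; intros [xy nadj]; split; auto; congruence.
Qed.

Lemma embeds_compl (A B : Graph) : embeds A B -> embeds (compl A) (compl B).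
Proof.
  intros [f [f_inj f_adj]]; exists f; split; [|apply compl_adj_iff]; assumption.
Qed.

Lemma equimorphic_compl (A B : Graph) :
  equimorphic A B -> equimorphic (compl A) (compl B).
Proof. intros []; split; apply embeds_compl; assumption. Qed.

Lemma isomorphic_compl (A B : Graph) :
  isomorphic A B -> isomorphic (compl A) (compl B).
Proof.
  intros [f [g [gf [fg f_adj]]]]; exists f, g; split; [|split]; auto.
  apply compl_adj_iff; [|exact f_adj].
  intros x y e; rewrite <- (gf x), <- (gf y), e; reflexivity.
Qed.

Lemma isomorphic_of_compl (A B : Graph) :
  isomorphic (compl A) (compl B) -> isomorphic A B.
Proof.
  intro i; apply isomorphic_compl in i.
  eapply isomorphic_trans; [apply isomorphic_sym, isomorphic_compl_compl|].
  eapply isomorphic_trans; [exact i | apply isomorphic_compl_compl].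
Qed.

Lemma compl_adj_of_unreachable (G : Graph) (x y : V G) :
  ~ reach G x y -> adj (compl G) x y.
Proof.
  intro unreached; split.
  - intros ->; apply unreached, rt_refl.
  - intro a; apply unreached, rt_step, a.
Qed.

(* Any two vertices are joined in the complement, either directly or through
   a vertex outside the component of the first one. *)
Lemma connected_compl (G : Graph) :
  inhabited (V G) -> ~ connected G -> connected (compl G).
Proof.
  intros [v] disconnected; split; [exact (inhabits v)|]; intros x y.
  destruct (classic (reach G x y)) as [xy | nxy];
    [|apply rt_step, compl_adj_of_unreachable, nxy].
  destruct (not_connected_unreachable G x disconnected) as [z nxz].
  apply rt_trans with z; apply rt_step, compl_adj_of_unreachable; [exact nxz|].
  intro zy; apply nxz; eapply rt_trans; [exact xy | apply reach_sym, zy].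
Qed.

Definition add_isolated (G : Graph) : Graph.
Proof.
  refine (mkGraph (option (V G))
    (fun u v => match u, v with Some a, Some b => adj G a b | _, _ => False end) _ _).
  - intros [a|] [b|]; simpl; auto using adj_sym.
  - intros [a|]; simpl; auto using adj_irrefl.
Defined.

Lemma embeds_add_isolated_r (G : Graph) : embeds G (add_isolated G).
Proof. exists (@Some _); split; [congruence | simpl; tauto]. Qed.

Lemma embeds_add_isolated (A B : Graph) :
  embeds A B -> embeds (add_isolated A) (add_isolated B).
Proof.
  intros [f [f_inj f_adj]]; exists (option_map f); split.
  - intros [a|] [b|] e; inversion e; f_equal; auto.
  - intros [a|] [b|]; simpl; [apply f_adj | tauto..].
Qed.

Lemma connected_compl_add_isolated (G : Graph) : connected (compl (add_isolated G)).
Proof.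
  split; [exact (inhabits None)|].
  assert (from_None : forall u, reach (compl (add_isolated G)) None u).
  { intros [a|]; [apply rt_step; split; [congruence | auto] | apply rt_refl]. }
  intros x y; apply rt_trans with None; [apply reach_sym|]; apply from_None.
Qed.

(* The new vertex is sent to a vertex outside the component of the copy of G. *)
Lemma embeds_add_isolated_of_disconnected (G K : Graph) :
  connected G -> embeds G K -> ~ connected K -> embeds (add_isolated G) K.
Proof.
  intros [[g0] reach_all] [f [f_inj f_adj]] disconnected.
  destruct (not_connected_unreachable K (f g0) disconnected) as [z nz].
  assert (reach_f : forall g, reach K (f g0) (f g)).
  { intro g; apply reach_map; [intros; apply f_adj; assumption | apply reach_all]. }
  assert (z_not_adj : forall g, ~ adj K (f g) z).
  { intros g a; apply nz; eapply rt_trans; [apply reach_f | apply rt_step, a]. }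
  exists (fun u => match u with Some g => f g | None => z end); split.
  - intros [a|] [b|] e; [f_equal; auto | | |reflexivity];
      exfalso; apply nz; [rewrite <- e | rewrite e]; apply reach_f.
  - intros [a|] [b|]; simpl; [apply f_adj | | |]; split; try tauto.
    + apply z_not_adj.
    + intro a; apply (z_not_adj b), adj_sym, a.
    + apply adj_irrefl.
Qed.

Lemma not_isomorphic_add_isolated2 (G : Graph) :
  (forall v, ~ isolated G v) ->
  ~ isomorphic (add_isolated (add_isolated G)) (add_isolated G).
Proof.
  intros no_isolated [p [q [qp [pq p_adj]]]].
  assert (to_None : forall a, isolated _ a -> p a = None).
  { intros a iso; destruct (p a) as [g|] eqn:pa; [exfalso|reflexivity].
    apply (no_isolated g); intros c gc.
    apply (iso (q (Some c))), p_adj; rewrite pa, pq; exact gc. }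
  assert (p None = p (Some None)) as e.
  { rewrite (to_None None), (to_None (Some None)); [reflexivity | |];
      intros [w|] a; exact a. }
  apply (f_equal q) in e; rewrite !qp in e; discriminate.
Qed.

Definition covers (G : Graph) (l : list Graph) : Prop :=
  forall H, equimorphic H G -> exists H', In H' l /\ isomorphic H H'.

Lemma covers_equimorphic (A G : Graph) (l : list Graph) :
  equimorphic A G -> covers G l -> covers A l.
Proof. intros eAG cov H eHA; apply cov; eapply equimorphic_trans; eassumption. Qed.

Lemma covers_compl (G : Graph) (l : list Graph) :
  covers G l -> covers (compl G) (map compl l).
Proof.
  intros cov X eXG.
  destruct (cov (compl X)) as [H' [inH' iso]].
  { eapply equimorphic_trans; [apply equimorphic_compl, eXG|].
    apply equimorphic_of_isomorphic, isomorphic_compl_compl. }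
  exists (compl H'); split; [apply in_map, inH'|].
  eapply isomorphic_trans; [apply isomorphic_sym, isomorphic_compl_compl|].
  apply isomorphic_compl, iso.
Qed.

Lemma one_equimorphism_class_compl (G : Graph) :
  one_equimorphism_class (compl G) -> one_equimorphism_class G.
Proof.
  intros one H eHG; apply isomorphic_of_compl, one, equimorphic_compl, eHG.
Qed.

Lemma one_equimorphism_class_empty (G : Graph) :
  ~ inhabited (V G) -> one_equimorphism_class G.
Proof.
  intros empty H [[f _] _].
  assert (no_vertex : forall x : V H, False) by (intro x; apply empty, inhabits, f, x).
  exists f, (fun y => False_rect _ (empty (inhabits y))); split; [|split];
    [intro x; destruct (no_vertex x) | intro y; destruct (empty (inhabits y))
    | intro x; destruct (no_vertex x)].
Qed.

Section ConnectedDichotomy.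

Hypothesis connected_dichotomy : forall G : Graph, connected G ->
  one_connected_equimorphism_class G \/
  infinitely_many_connected_equimorphism_classes G.

Lemma one_connected_class_of_covers (G : Graph) (l : list Graph) :
  connected G -> covers G l -> one_connected_equimorphism_class G.
Proof.
  intros cG cov; destruct (connected_dichotomy G cG) as [one | infinite]; [exact one|].
  exfalso; apply infinite; exists l; intros H _; apply cov.
Qed.

Lemma one_class_of_connected_covers (G : Graph) (l : list Graph) :
  connected G -> covers G l -> one_equimorphism_class G.
Proof.
  intros cG cov K eKG.
  destruct (classic (connected K)) as [cK | disconnected];
    [exact (one_connected_class_of_covers G l cG cov K cK eKG) | exfalso].
  set (G1 := add_isolated G); set (G2 := add_isolated G1).
  assert (G1_in_G : embeds G1 G).
  { eapply embeds_trans; [|apply eKG].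
    apply embeds_add_isolated_of_disconnected; [exact cG | apply eKG | exact disconnected]. }
  assert (no_isolated : forall v, ~ isolated G v).
  { destruct (proj1 cG) as [g0]; destruct G1_in_G as [e [e_inj _]].
    apply (connected_not_isolated G (e None) (e (Some g0)) cG).
    intro same; discriminate (e_inj _ _ same). }
  assert (eG1G : equimorphic G1 G) by (split; [exact G1_in_G | apply embeds_add_isolated_r]).
  assert (eG2G1 : equimorphic (compl G2) (compl G1)).
  { apply equimorphic_compl; split;
      [apply embeds_add_isolated, G1_in_G | apply embeds_add_isolated_r]. }
  apply (not_isomorphic_add_isolated2 G no_isolated), isomorphic_of_compl.
  apply (one_connected_class_of_covers (compl G1) (map compl l));
    [apply connected_compl_add_isolated | apply covers_compl, (covers_equimorphic _ _ _ eG1G cov)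
    | apply connected_compl_add_isolated | exact eG2G1].
Qed.

End ConnectedDichotomy.

Theorem proposition1p5 :
  (forall G : Graph, connected G ->
     one_connected_equimorphism_class G \/
     infinitely_many_connected_equimorphism_classes G) ->
  forall G : Graph,
    one_equimorphism_class G \/ infinitely_many_equimorphism_classes G.
Proof.
  intros dichotomy G.
  destruct (classic (exists l, covers G l)) as [[l cov] | uncovered];
    [left | right; exact uncovered].
  destruct (classic (inhabited (V G))) as [nonempty | empty];
    [| exact (one_equimorphism_class_empty G empty)].
  destruct (classic (connected G)) as [cG | disconnected];
    [exact (one_class_of_connected_covers dichotomy G l cG cov)|].
  apply one_equimorphism_class_compl.
  apply (one_class_of_connected_covers dichotomy (compl G) (map compl l));
    [apply connected_compl; assumption | apply covers_compl, cov].
Qed.
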